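(* Let $N_t, N_m, N_e$ be positive integers with $N_e < N_t$, put $n = N_t - N_e$, $m = \min(n, N_m)$, $k = \max(n, N_m)$. Fix $g>0$, $r_s>0$ and positive coefficients $b_1,\dots,b_m$ with $b_m \le \dots \le b_1$ and $\sum_{l=1}^m b_l = r_s$. For $\eta>0$ define $\xi(x) = \frac{n}{\eta}\big((1+g\eta)^x-1\big)$, $\alpha_l = \Gamma_{inc}(\xi(r_s),k-l+1)$, $\beta_l = \Gamma_{inc}(\xi(b_l),k-l+1)$, and for $x>0$ $$f_l(x) = \Big((1+g\eta)^x - x g\eta(1+g\eta)^{x-1} - 1\Big)\frac{\xi(x)^{k-l}e^{-\xi(x)}/(k-l)!}{\Gamma_{inc}(\xi(x),k-l+1)}.$$ Let $U(\eta) = \prod_{l=1}^m \alpha_l\Big(1 - \prod_{l=1}^m\big[1 - \frac{\beta_l}{\alpha_l}\big]\Big)$ (the upper bound on the zero-forcing secrecy outage probability). Then $$-\eta\frac{d}{d\eta}\ln U(\eta) = \frac{n}{\eta}\sum_{l=1}^m\left[f_l(r_s) + \frac{\beta_l}{\alpha_l}\big(f_l(b_l)-f_l(r_s)\big)\frac{\prod_{j\ne l}\big(1-\frac{\beta_j}{\alpha_j}\big)}{1-\prod_{j=1}^m\big(1-\frac{\beta_j}{\alpha_j}\big)}\right],$$ and this quantity is the secrecy diversity gain estimate $\hat d_s^U(r_s,\eta)$ of the zero-forcing scheme.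
   Context: $\Gamma_{inc}(x,a) = \frac{1}{(a-1)!}\int_0^x t^{a-1}e^{-t}\,dt$ for $x\ge 0$ and positive integer $a$. The secrecy diversity gain associated with an error probability $P(\eta)$ at SNR $\eta$ is defined as $-\eta\,\partial \ln P/\partial\eta$, with the secrecy rate $R_s = r_s\ln(1+g\eta)$ (fixed $r_s$). Products $\prod_{j\neq l}$ range over $j\in\{1,\dots,m\}\setminus\{l\}$. *)

From Stdlib Require Import Reals Factorial.
From Coquelicot Require Import Coquelicot.
Open Scope R_scope.

Fixpoint prodR (f : nat -> R) (m : nat) : R :=
  match m with O => 1 | S p => prodR f p * f (S p) end.
Fixpoint sumR (f : nat -> R) (m : nat) : R :=
  match m with O => 0 | S p => sumR f p + f (S p) end.
Fixpoint prod_except (f : nat -> R) (m l : nat) : R :=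
  match m with
  | O => 1
  | S p => prod_except f p l * (if Nat.eqb (S p) l then 1 else f (S p))
  end.

Definition Gamma_inc (x : R) (a : nat) : R :=
  / INR (Factorial.fact (a - 1)) * RInt (fun t => t ^ (a - 1) * exp (- t)) 0 x.

Definition secrecy_diversity_gain (P : R -> R) (eta : R) : R :=
  - eta * Derive (fun e => ln (P e)) eta.

Section ZF.
Variables (Nt Nm Ne : nat) (g rs : R) (b : nat -> R).

Definition nZ : nat := (Nt - Ne)%nat.
Definition mZ : nat := Nat.min nZ Nm.
Definition kZ : nat := Nat.max nZ Nm.

Definition xi (eta x : R) : R := INR nZ / eta * (Rpower (1 + g * eta) x - 1).
Definition alphaZ (eta : R) (l : nat) : R := Gamma_inc (xi eta rs) (kZ - l + 1).
Definition betaZ (eta : R) (l : nat) : R := Gamma_inc (xi eta (b l)) (kZ - l + 1).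

Definition fZ (eta : R) (l : nat) (x : R) : R :=
  (Rpower (1 + g * eta) x - x * g * eta * Rpower (1 + g * eta) (x - 1) - 1)
  * (xi eta x ^ (kZ - l) * exp (- xi eta x) / INR (Factorial.fact (kZ - l)))
  / Gamma_inc (xi eta x) (kZ - l + 1).

Definition ratioZ (eta : R) (l : nat) : R := 1 - betaZ eta l / alphaZ eta l.

Definition UZ (eta : R) : R :=
  prodR (alphaZ eta) mZ * (1 - prodR (ratioZ eta) mZ).

Definition dsU_rhs (eta : R) : R :=
  INR nZ / eta *
  sumR (fun l => fZ eta l rs
          + betaZ eta l / alphaZ eta l * (fZ eta l (b l) - fZ eta l rs)
            * prod_except (ratioZ eta) mZ l / (1 - prodR (ratioZ eta) mZ)) mZ.
End ZF.

(** Every factor of the bound depends on [eta] only through [xi eta x] with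
    [x = rs] or [x = b l], and by the chain rule and the fundamental theorem
    of calculus the logarithmic derivative of [Gamma_inc (xi eta x) a] is
    [-(n / eta^2) f_l(x)].  Writing [U = prod alpha_l * (1 - prod r_l)] with
    [r_l = 1 - beta_l / alpha_l], the log-derivative of the first factor is the
    sum of these, and [r_l' = (beta_l / alpha_l) (n / eta^2) (f_l(b_l) - f_l(rs))]
    by the quotient rule; the Leibniz rule for the second factor then gives the
    formula after multiplying by [-eta]. *)
From Stdlib Require Import Reals Lra Lia Psatz Factorial.
From Coquelicot Require Import Coquelicot.
Open Scope R_scope.

Lemma sumR_ext f g m :
  (forall l, (1 <= l <= m)%nat -> f l = g l) -> sumR f m = sumR g m.
Proof.
  induction m as [|m IH]; intros H; cbn [sumR prodR prod_except]; [reflexivity|].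
  rewrite IH, H; [reflexivity | lia | intros; apply H; lia].
Qed.

Lemma sumR_scal c f m : sumR (fun l => c * f l) m = c * sumR f m.
Proof. induction m as [|m IH]; simpl; [lra|]. rewrite IH; lra. Qed.

Lemma sumR_scalr c f m : sumR (fun l => f l * c) m = sumR f m * c.
Proof. induction m as [|m IH]; simpl; [lra|]. rewrite IH; lra. Qed.

Lemma sumR_sub_div f h c m :
  sumR f m - sumR h m / c = sumR (fun l => f l - h l / c) m.
Proof. induction m as [|m IH]; simpl; unfold Rdiv in *; [ring|]. rewrite <- IH; ring. Qed.

Lemma sumR_opp_scal_div c d f m :
  - (c * sumR f m) / d = sumR (fun l => - (c * f l) / d) m.
Proof. induction m as [|m IH]; simpl; unfold Rdiv in *; [ring|]. rewrite <- IH; ring. Qed.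

Lemma sumR_ge0 f m : (forall l, (1 <= l <= m)%nat -> 0 <= f l) -> 0 <= sumR f m.
Proof.
  induction m as [|m IH]; intros H; cbn [sumR prodR prod_except]; [lra|].
  assert (0 <= f (S m)) by (apply H; lia).
  assert (0 <= sumR f m) by (apply IH; intros; apply H; lia).
  lra.
Qed.

Lemma sumR_ge_term f m l :
  (forall j, (1 <= j <= m)%nat -> 0 <= f j) -> (1 <= l <= m)%nat -> f l <= sumR f m.
Proof.
  induction m as [|m IH]; intros H Hl; cbn [sumR prodR prod_except]; [lia|].
  assert (0 <= f (S m)) by (apply H; lia).
  destruct (Nat.eq_dec l (S m)) as [->|Hn].
  - assert (0 <= sumR f m) by (apply sumR_ge0; intros; apply H; lia). lra.
  - assert (f l <= sumR f m) by (apply IH; [intros; apply H|]; lia). lra.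
Qed.

Lemma prod_except_outside f m l : (m < l)%nat -> prod_except f m l = prodR f m.
Proof.
  induction m as [|m IH]; intros Hl; cbn [sumR prodR prod_except]; [reflexivity|].
  rewrite IH by lia.
  destruct (Nat.eqb_spec (S m) l); [lia | ring].
Qed.

Lemma prodR_prod_except f m l :
  (1 <= l <= m)%nat -> prodR f m = prod_except f m l * f l.
Proof.
  induction m as [|m IH]; intros Hl; cbn [sumR prodR prod_except]; [lia|].
  destruct (Nat.eq_dec l (S m)) as [->|Hn].
  - rewrite Nat.eqb_refl, prod_except_outside by lia. ring.
  - rewrite IH by lia. destruct (Nat.eqb_spec (S m) l); [lia | ring].
Qed.

Lemma prodR_pos f m : (forall l, (1 <= l <= m)%nat -> 0 < f l) -> 0 < prodR f m.
Proof.
  induction m as [|m IH]; intros H; cbn [sumR prodR prod_except]; [lra|].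
  apply Rmult_lt_0_compat; [apply IH; intros; apply H | apply H]; lia.
Qed.

Lemma prodR_unit_interval f m :
  (forall l, (1 <= l <= m)%nat -> 0 <= f l < 1) -> 0 <= prodR f m <= 1.
Proof.
  induction m as [|m IH]; intros H; cbn [sumR prodR prod_except]; [lra|].
  assert (0 <= prodR f m <= 1) by (apply IH; intros; apply H; lia).
  assert (0 <= f (S m) < 1) by (apply H; lia).
  nra.
Qed.

Lemma prodR_lt1 f m :
  (1 <= m)%nat -> (forall l, (1 <= l <= m)%nat -> 0 <= f l < 1) -> prodR f m < 1.
Proof.
  destruct m as [|m]; intros Hm H; cbn [prodR]; [lia|].
  assert (0 <= prodR f m <= 1) by (apply prodR_unit_interval; intros; apply H; lia).
  assert (0 <= f (S m) < 1) by (apply H; lia).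
  nra.
Qed.

Lemma is_derive_eq (f : R -> R) (x l l' : R) : is_derive f x l -> l = l' -> is_derive f x l'.
Proof. now intros H <-. Qed.

Lemma is_derive_prodR (F : R -> nat -> R) (dF : nat -> R) m x :
  (forall l, (1 <= l <= m)%nat -> is_derive (fun e => F e l) x (dF l)) ->
  is_derive (fun e => prodR (F e) m) x (sumR (fun l => dF l * prod_except (F x) m l) m).
Proof.
  induction m as [|m IH]; intros H; cbn [prodR sumR].
  - apply (is_derive_const 1).
  - eapply is_derive_eq.
    { apply (is_derive_mult (fun e => prodR (F e) m) (fun e => F e (S m)));
        [apply IH; intros; apply H; lia | apply H; lia | intros; apply Rmult_comm]. }
    rewrite (sumR_ext (fun l => dF l * prod_except (F x) (S m) l)
                      (fun l => dF l * prod_except (F x) m l * F x (S m))).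
    + cbn [prod_except]. rewrite Nat.eqb_refl, prod_except_outside, sumR_scalr by lia.
      unfold plus, mult; simpl. ring.
    + intros l Hl. cbn [prod_except]. destruct (Nat.eqb_spec (S m) l); [lia | ring].
Qed.

Lemma is_derive_prodR_log (F : R -> nat -> R) (lF : nat -> R) m x :
  (forall l, (1 <= l <= m)%nat -> is_derive (fun e => F e l) x (F x l * lF l)) ->
  is_derive (fun e => prodR (F e) m) x (prodR (F x) m * sumR lF m).
Proof.
  intros H. eapply is_derive_eq; [apply is_derive_prodR, H|].
  rewrite <- sumR_scal. apply sumR_ext. intros l Hl.
  rewrite (prodR_prod_except (F x) m l Hl). ring.
Qed.

Lemma is_derive_ln_prod_one_minus_prod (A r : R -> nat -> R) (lA dr : nat -> R) m x :
  (forall l, (1 <= l <= m)%nat -> is_derive (fun e => A e l) x (A x l * lA l)) ->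
  (forall l, (1 <= l <= m)%nat -> is_derive (fun e => r e l) x (dr l)) ->
  0 < prodR (A x) m -> prodR (r x) m < 1 ->
  is_derive (fun e => ln (prodR (A e) m * (1 - prodR (r e) m))) x
    (sumR lA m - sumR (fun l => dr l * prod_except (r x) m l) m / (1 - prodR (r x) m)).
Proof.
  intros HA Hr HPA HPr.
  assert (HU : is_derive (fun e => prodR (A e) m * (1 - prodR (r e) m)) x
     (prodR (A x) m * sumR lA m * (1 - prodR (r x) m)
      - prodR (A x) m * sumR (fun l => dr l * prod_except (r x) m l) m)).
  { eapply is_derive_eq.
    { apply (is_derive_mult (fun e => prodR (A e) m) (fun e => 1 - prodR (r e) m));
        [apply is_derive_prodR_log, HA | | intros; apply Rmult_comm].
      apply (is_derive_minus (fun _ => 1) (fun e => prodR (r e) m));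
        [apply is_derive_const | apply is_derive_prodR, Hr]. }
    unfold minus, plus, opp, mult, zero; simpl. ring. }
  eapply is_derive_eq.
  { apply (is_derive_comp ln (fun e => prodR (A e) m * (1 - prodR (r e) m))), HU.
    apply is_derive_Reals, derivable_pt_lim_ln. nra. }
  unfold scal; simpl; unfold mult; simpl. field. lra.
Qed.

Lemma is_derive_one_minus_ratio (a c : R -> R) x la lc :
  is_derive a x (a x * la) -> is_derive c x (c x * lc) -> a x <> 0 ->
  is_derive (fun e => 1 - c e / a e) x (- (c x / a x) * (lc - la)).
Proof.
  intros Ha Hc Ha0. eapply is_derive_eq.
  { apply (is_derive_minus (fun _ => 1) (fun e => c e / a e));
      [apply is_derive_const | apply is_derive_div; [exact Hc | exact Ha | exact Ha0]]. }
  unfold minus, plus, opp, zero; simpl. field. exact Ha0.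
Qed.

Lemma Gamma_inc_integrand_continuous a t :
  continuous (fun t => t ^ (a - 1) * exp (- t)) t.
Proof. apply (ex_derive_continuous (V:=R_NormedModule)). auto_derive. auto. Qed.

Lemma ex_RInt_Gamma_inc_integrand a u v :
  ex_RInt (fun t => t ^ (a - 1) * exp (- t)) u v.
Proof.
  apply (ex_RInt_continuous (V:=R_CompleteNormedModule)).
  intros; apply Gamma_inc_integrand_continuous.
Qed.

Lemma is_derive_Gamma_inc_comp (h : R -> R) dh x a : is_derive h x dh ->
  is_derive (fun e => Gamma_inc (h e) a) x
    (h x ^ (a - 1) * exp (- h x) / INR (fact (a - 1)) * dh).
Proof.
  intros Hh. unfold Gamma_inc. eapply is_derive_eq.
  { apply is_derive_scal.
    apply (is_derive_comp (fun y => RInt (fun t => t ^ (a - 1) * exp (- t)) 0 y) h), Hh.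
    apply (is_derive_RInt (fun t => t ^ (a - 1) * exp (- t)) _ 0).
    - apply filter_forall. intros y.
      apply (RInt_correct (V:=R_CompleteNormedModule)), ex_RInt_Gamma_inc_integrand.
    - apply Gamma_inc_integrand_continuous. }
  unfold scal; simpl; unfold mult; simpl. unfold Rdiv. ring.
Qed.

Lemma Gamma_inc_pos x a : 0 < x -> 0 < Gamma_inc x a.
Proof.
  intros Hx. unfold Gamma_inc. apply Rmult_lt_0_compat.
  - apply Rinv_0_lt_compat, lt_0_INR, lt_O_fact.
  - apply RInt_gt_0; [exact Hx | | intros; apply Gamma_inc_integrand_continuous].
    intros t Ht. apply Rmult_lt_0_compat; [apply pow_lt; lra | apply exp_pos].
Qed.

Lemma Gamma_inc_le x y a : 0 <= x <= y -> Gamma_inc x a <= Gamma_inc y a.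
Proof.
  intros Hxy. unfold Gamma_inc. apply Rmult_le_compat_l.
  { left; apply Rinv_0_lt_compat, lt_0_INR, lt_O_fact. }
  rewrite <- (RInt_Chasles (V:=R_CompleteNormedModule) _ 0 x y)
    by apply ex_RInt_Gamma_inc_integrand.
  assert (0 <= RInt (fun t => t ^ (a - 1) * exp (- t)) x y).
  { apply RInt_ge_0; [lra | apply ex_RInt_Gamma_inc_integrand |].
    intros t Ht. apply Rmult_le_pos; [apply pow_le; lra | left; apply exp_pos]. }
  unfold plus; simpl. lra.
Qed.

Section ZeroForcing.
Variables (Nt Nm Ne : nat) (g rs eta : R) (b : nat -> R).
Hypotheses (HNe : (Ne < Nt)%nat) (Hg : 0 < g) (Heta : 0 < eta).

Lemma nZ_pos : 0 < INR (nZ Nt Ne).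
Proof. apply lt_0_INR. unfold nZ. lia. Qed.

Lemma xi_pos x : 0 < x -> 0 < xi Nt Ne g eta x.
Proof.
  intros Hx. unfold xi.
  assert (Rpower (1 + g * eta) 0 < Rpower (1 + g * eta) x) by (apply Rpower_lt; nra).
  rewrite Rpower_O in H by nra.
  apply Rmult_lt_0_compat; [apply Rdiv_lt_0_compat; [apply nZ_pos | lra] | lra].
Qed.

Lemma xi_le x y : x <= y -> xi Nt Ne g eta x <= xi Nt Ne g eta y.
Proof.
  intros Hxy. unfold xi. apply Rmult_le_compat_l.
  - left; apply Rdiv_lt_0_compat; [apply nZ_pos | lra].
  - assert (Rpower (1 + g * eta) x <= Rpower (1 + g * eta) y)
      by (apply Rle_Rpower; nra).
    lra.
Qed.

Lemma is_derive_xi x :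
  is_derive (fun e => xi Nt Ne g e x) eta
   (- INR (nZ Nt Ne) / eta ^ 2 * (Rpower (1 + g * eta) x - 1)
    + INR (nZ Nt Ne) / eta * (x * g * Rpower (1 + g * eta) (x - 1))).
Proof.
  unfold xi, Rpower. auto_derive.
  - repeat split; nra.
  - replace ((x - 1) * ln (1 + g * eta)) with (x * ln (1 + g * eta) + - ln (1 + g * eta))
      by ring.
    rewrite exp_plus, exp_Ropp, exp_ln by nra.
    field. split; nra.
Qed.

Lemma is_derive_Gamma_inc_xi l x : 0 < x ->
  is_derive (fun e => Gamma_inc (xi Nt Ne g e x) (kZ Nt Nm Ne - l + 1)) eta
    (Gamma_inc (xi Nt Ne g eta x) (kZ Nt Nm Ne - l + 1)
     * - (INR (nZ Nt Ne) / eta ^ 2 * fZ Nt Nm Ne g eta l x)).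
Proof.
  intros Hx. eapply is_derive_eq; [apply is_derive_Gamma_inc_comp, is_derive_xi|].
  assert (HG := Gamma_inc_pos _ (kZ Nt Nm Ne - l + 1) (xi_pos x Hx)).
  replace (kZ Nt Nm Ne - l + 1 - 1)%nat with (kZ Nt Nm Ne - l)%nat by lia.
  unfold fZ. field.
  split; [apply not_0_INR, fact_neq_0 | lra].
Qed.

Hypothesis Hrs : 0 < rs.
Hypothesis Hb_pos : forall l, (1 <= l <= mZ Nt Nm Ne)%nat -> 0 < b l.
Hypothesis Hb_le : forall l, (1 <= l <= mZ Nt Nm Ne)%nat -> b l <= rs.

Lemma alphaZ_pos l : 0 < alphaZ Nt Nm Ne g rs eta l.
Proof. apply Gamma_inc_pos, xi_pos, Hrs. Qed.

Lemma ratioZ_unit_interval l :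
  (1 <= l <= mZ Nt Nm Ne)%nat -> 0 <= ratioZ Nt Nm Ne g rs b eta l < 1.
Proof.
  intros Hl. unfold ratioZ.
  assert (Ha := alphaZ_pos l).
  assert (Hb : 0 < betaZ Nt Nm Ne g b eta l) by apply Gamma_inc_pos, xi_pos, Hb_pos, Hl.
  assert (Hba : betaZ Nt Nm Ne g b eta l <= alphaZ Nt Nm Ne g rs eta l).
  { apply Gamma_inc_le. split; [left; apply xi_pos, Hb_pos, Hl | apply xi_le, Hb_le, Hl]. }
  assert (0 < betaZ Nt Nm Ne g b eta l / alphaZ Nt Nm Ne g rs eta l)
    by (apply Rdiv_lt_0_compat; lra).
  assert (betaZ Nt Nm Ne g b eta l / alphaZ Nt Nm Ne g rs eta l <= 1)
    by (apply Rle_div_l; lra).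
  lra.
Qed.

Lemma is_derive_ratioZ l : (1 <= l <= mZ Nt Nm Ne)%nat ->
  is_derive (fun e => ratioZ Nt Nm Ne g rs b e l) eta
    (betaZ Nt Nm Ne g b eta l / alphaZ Nt Nm Ne g rs eta l
     * (INR (nZ Nt Ne) / eta ^ 2)
     * (fZ Nt Nm Ne g eta l (b l) - fZ Nt Nm Ne g eta l rs)).
Proof.
  intros Hl. eapply is_derive_eq.
  { apply is_derive_one_minus_ratio;
      [ apply is_derive_Gamma_inc_xi, Hrs
      | apply is_derive_Gamma_inc_xi, Hb_pos, Hl
      | apply Rgt_not_eq, alphaZ_pos ]. }
  cbv beta. ring.
Qed.

Hypothesis Hm : (1 <= mZ Nt Nm Ne)%nat.

Lemma is_derive_ln_UZ :
  is_derive (fun e => ln (UZ Nt Nm Ne g rs b e)) eta (- dsU_rhs Nt Nm Ne g rs b eta / eta).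
Proof.
  set (m := mZ Nt Nm Ne).
  set (P := prodR (ratioZ Nt Nm Ne g rs b eta) m).
  assert (HP : P < 1) by (apply prodR_lt1; [exact Hm | apply ratioZ_unit_interval]).
  eapply is_derive_eq.
  { apply is_derive_ln_prod_one_minus_prod;
      [ intros; apply is_derive_Gamma_inc_xi, Hrs
      | apply is_derive_ratioZ
      | apply prodR_pos; intros; apply alphaZ_pos
      | exact HP ]. }
  fold m P. unfold dsU_rhs. fold m P.
  rewrite sumR_sub_div, sumR_opp_scal_div.
  apply sumR_ext. intros l Hl. field. repeat split; [apply Rgt_not_eq, alphaZ_pos | lra | lra].
Qed.

End ZeroForcing.

Theorem corollary1 (Nt Nm Ne : nat) (g rs : R) (b : nat -> R) (eta : R) :
  (0 < Nt)%nat -> (0 < Nm)%nat -> (0 < Ne)%nat -> (Ne < Nt)%nat ->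
  0 < g -> 0 < rs ->
  (forall l, (1 <= l <= mZ Nt Nm Ne)%nat -> 0 < b l) ->
  (forall l, (1 <= l < mZ Nt Nm Ne)%nat -> b (S l) <= b l) ->
  sumR b (mZ Nt Nm Ne) = rs ->
  0 < eta ->
  ex_derive (fun e => ln (UZ Nt Nm Ne g rs b e)) eta /\
  secrecy_diversity_gain (UZ Nt Nm Ne g rs b) eta = dsU_rhs Nt Nm Ne g rs b eta.
Proof.
  intros _ HNm _ HNe Hg Hrs Hb_pos _ Hsum Heta.
  assert (Hm : (1 <= mZ Nt Nm Ne)%nat) by (unfold mZ, nZ; lia).
  assert (Hb_le : forall l, (1 <= l <= mZ Nt Nm Ne)%nat -> b l <= rs).
  { intros l Hl. rewrite <- Hsum.
    apply sumR_ge_term; [intros; left; apply Hb_pos | ]; assumption. }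
  assert (HD := is_derive_ln_UZ Nt Nm Ne g rs eta b HNe Hg Heta Hrs Hb_pos Hb_le Hm).
  split; [eexists; exact HD |].
  unfold secrecy_diversity_gain. erewrite is_derive_unique by exact HD.
  field. lra.
Qed.
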